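(* Let $\varepsilon\in\{1,-1\}$, let $\mathbb{M}^2(\varepsilon)$ be $\mathbb{S}^2$ if $\varepsilon=1$ and $\mathbb{H}^2$ if $\varepsilon=-1$, and let $\psi:S\to\mathbb{M}^2(\varepsilon)\times\mathbb{R}$ be an immersed surface with constant extrinsic curvature $K>0$, normal $N$ chosen so that $II$ is positive definite. For a local conformal parameter $z$ of $II$, with $I=E\,dz^2+2F|dz|^2+\bar E\,d\bar z^2$, define $Q=E+g(\nu)h_z^2$. Then $$|Q_{\bar z}|^2\le\frac{K\,g'(\nu)^2(1-\nu^2)^2|h_z|^2}{4\chi(\nu)}\,|Q|^2.$$
   Context: $\mathbb{M}^2(\varepsilon)\times\mathbb{R}$ carries the product metric; $h$ is the height function, $\nu=\langle N,\partial_t\rangle$. The real analytic functions $g,\chi$ are $$g(\nu)=\frac{\nu^2-1+\varepsilon K\left(e^{\varepsilon(1-\nu^2)/K}-1\right)}{(1-\nu^2)^2},\qquad \chi(\nu)=\frac{\varepsilon K\left(e^{\varepsilon(1-\nu^2)/K}-1\right)}{1-\nu^2}$$ (extended analytically to $\nu=\pm1$; $\chi>0$ on $[-1,1]$). $Q\,dz^2$ is the $(2,0)$-part, with respect to the conformal structure of $II$, of the quadratic form $A=I+g(\nu)\,dh^2$. *)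

From Stdlib Require Import Reals List.
From Coquelicot Require Import Coquelicot.
Open Scope R_scope.

(** With s = 1 - nu^2, both are given by the formulas of the paper for s <> 0
    and by their (removable-singularity) analytic values at s = 0, i.e. nu = +-1:
    g(+-1) = eps/(2K), chi(+-1) = 1. *)
Definition gfun (eps K nu : R) : R :=
  let s := 1 - nu ^ 2 in
  if Req_EM_T s 0 then eps / (2 * K)
  else (nu ^ 2 - 1 + eps * K * (exp (eps * s / K) - 1)) / (s ^ 2).

Definition chifun (eps K nu : R) : R :=
  let s := 1 - nu ^ 2 in
  if Req_EM_T s 0 then 1
  else eps * K * (exp (eps * s / K) - 1) / s.

Definition pu (f : R -> R -> R) (u v : R) : R := Derive (fun s => f s v) u.
Definition pv (f : R -> R -> R) (u v : R) : R := Derive (fun s => f u s) v.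

Fixpoint dpart (ds : list bool) (f : R -> R -> R) : R -> R -> R :=
  match ds with
  | List.nil => f
  | List.cons d ds' => if d then pu (dpart ds' f) else pv (dpart ds' f)
  end.

Definition smooth_on (U : R * R -> Prop) (f : R -> R -> R) : Prop :=
  forall (ds : list bool) (u v : R), U (u, v) ->
    ex_derive (fun s => dpart ds f s v) u /\
    ex_derive (fun s => dpart ds f u s) v /\
    continuous (fun p : R * R => dpart ds f (fst p) (snd p)) (u, v).

(** Vectors of R^4 are maps nat -> R (components 0,1,2,3); component 3 is the
    R-factor (coordinate t).  M^2(1) = S^2 in Euclidean R^3, M^2(-1) = H^2 the
    upper sheet of the hyperboloid in Lorentz–Minkowski R^3_1.  The product
    metric of M^2(eps) x R is the restriction of the following form. *)
Definition ip (eps : R) (a b : nat -> R) : R :=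
  a 0%nat * b 0%nat + a 1%nat * b 1%nat + eps * (a 2%nat * b 2%nat) + a 3%nat * b 3%nat.

Definition Du (F : nat -> R -> R -> R) (u v : R) : nat -> R := fun i => pu (F i) u v.
Definition Dv (F : nat -> R -> R -> R) (u v : R) : nat -> R := fun i => pv (F i) u v.
Definition Duu (F : nat -> R -> R -> R) (u v : R) : nat -> R := fun i => pu (pu (F i)) u v.
Definition Duv (F : nat -> R -> R -> R) (u v : R) : nat -> R := fun i => pv (pu (F i)) u v.
Definition Dvv (F : nat -> R -> R -> R) (u v : R) : nat -> R := fun i => pv (pv (F i)) u v.
Definition pt (F : nat -> R -> R -> R) (u v : R) : nat -> R := fun i => F i u v.

Definition I11 eps psi u v := ip eps (Du psi u v) (Du psi u v).
Definition I12 eps psi u v := ip eps (Du psi u v) (Dv psi u v).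
Definition I22 eps psi u v := ip eps (Dv psi u v) (Dv psi u v).
Definition II11 eps psi (N : nat -> R -> R -> R) u v := ip eps (Duu psi u v) (pt N u v).
Definition II12 eps psi (N : nat -> R -> R -> R) u v := ip eps (Duv psi u v) (pt N u v).
Definition II22 eps psi (N : nat -> R -> R -> R) u v := ip eps (Dvv psi u v) (pt N u v).

Definition cec_chart (eps K : R) (U : R * R -> Prop)
    (psi N : nat -> R -> R -> R) : Prop :=
  open U /\
  (forall i, (i < 4)%nat -> smooth_on U (psi i) /\ smooth_on U (N i)) /\
  forall u v, U (u, v) ->
    psi 0%nat u v ^ 2 + psi 1%nat u v ^ 2 + eps * psi 2%nat u v ^ 2 = eps /\
    (eps = -1 -> 0 < psi 2%nat u v) /\
    0 < I11 eps psi u v * I22 eps psi u v - I12 eps psi u v ^ 2 /\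
    ip eps (pt N u v) (pt N u v) = 1 /\
    N 0%nat u v * psi 0%nat u v + N 1%nat u v * psi 1%nat u v
      + eps * (N 2%nat u v * psi 2%nat u v) = 0 /\
    ip eps (pt N u v) (Du psi u v) = 0 /\
    ip eps (pt N u v) (Dv psi u v) = 0 /\
    0 < II11 eps psi N u v /\
    0 < II11 eps psi N u v * II22 eps psi N u v - II12 eps psi N u v ^ 2 /\
    (II11 eps psi N u v * II22 eps psi N u v - II12 eps psi N u v ^ 2)
      / (I11 eps psi u v * I22 eps psi u v - I12 eps psi u v ^ 2) = K /\
    II11 eps psi N u v = II22 eps psi N u v /\
    II12 eps psi N u v = 0.

Definition hgt (psi : nat -> R -> R -> R) : R -> R -> R := psi 3%nat.
Definition nuf (N : nat -> R -> R -> R) : R -> R -> R := N 3%nat.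

(** E = I(d_z, d_z), with d_z = (d_u - i d_v)/2, so that
    I = E dz^2 + 2F |dz|^2 + conj(E) dzbar^2 *)
Definition Ecoef eps psi u v : C :=
  ((I11 eps psi u v - I22 eps psi u v) / 4, - I12 eps psi u v / 2).

Definition hz psi u v : C := (pu (hgt psi) u v / 2, - pv (hgt psi) u v / 2).

Definition Qf eps K psi N u v : C :=
  Cplus (Ecoef eps psi u v)
        (Cmult (RtoC (gfun eps K (nuf N u v))) (Cmult (hz psi u v) (hz psi u v))).

Definition Qzbar eps K psi N u v : C :=
  let qr := fun a b => fst (Qf eps K psi N a b) in
  let qi := fun a b => snd (Qf eps K psi N a b) in
  ((pu qr u v - pv qi u v) / 2, (pu qi u v + pv qr u v) / 2).

(* Write s = 1 - nu^2 and II = L (du^2 + dv^2).  Expanding the second derivatives of psi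
   and the first derivatives of N in the frame (psi_u, psi_v, N, position vector of
   M^2(eps)) of R^4, and using the Codazzi equations (obtained by differentiating
   II_11 = II_22, II_12 = 0 and det II = K det I), every term of Q_zbar cancels except one,
   thanks to the ODE  g' s / 2 = 2 g nu - eps nu / K - eps g nu s / K  satisfied by g:
       Q_zbar = - (2 i K g'(nu) / L) Im(conj(h_z)^2 Q) h_z.
   As L^2 = K det I, the claim reduces to 16 chi Im(conj(h_z)^2 Q)^2 <= det I s^2 |Q|^2,
   a Lagrange-type identity for the form A = I + g dh^2, whose determinant is chi det I
   because |grad h|^2 = s. *)

From Stdlib Require Import Reals Lra Lia Psatz List.
From Coquelicot Require Import Coquelicot.
Open Scope R_scope.

(** * Diagonal forms and frames in R^4 *)

(* wdot eps 1 is the product metric ip of M^2(eps) x R; wdot eps 0 is the metric of the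
   ambient R^3 or R^3_1 of M^2(eps). *)
Definition wdot (w c : R) (a b : nat -> R) : R :=
  a 0%nat * b 0%nat + a 1%nat * b 1%nat + w * (a 2%nat * b 2%nat) + c * (a 3%nat * b 3%nat).

Lemma ip_wdot eps a b : ip eps a b = wdot eps 1 a b.
Proof. unfold ip, wdot; ring. Qed.

Lemma wdot_sym w c a b : wdot w c a b = wdot w c b a.
Proof. unfold wdot; ring. Qed.

Lemma wdot_ext w c (a a' b b' : nat -> R) :
  (forall i, (i < 4)%nat -> a i = a' i) -> (forall i, (i < 4)%nat -> b i = b' i) ->
  wdot w c a b = wdot w c a' b'.
Proof.
  intros Ha Hb. unfold wdot.
  rewrite (Ha 0%nat), (Ha 1%nat), (Ha 2%nat), (Ha 3%nat),
          (Hb 0%nat), (Hb 1%nat), (Hb 2%nat), (Hb 3%nat) by lia.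
  reflexivity.
Qed.

Lemma wdot_w0 w a b : wdot w 0 a b = wdot w 1 a b - a 3%nat * b 3%nat.
Proof. unfold wdot; ring. Qed.

Lemma ip_sym e x y : ip e x y = ip e y x.
Proof. unfold ip; ring. Qed.

Definition det3 a b c d e f g h i := a*(e*i - f*h) - b*(d*i - f*g) + c*(d*h - e*g).

Definition det4 (m : nat -> nat -> R) :=
  m 0%nat 0%nat * det3 (m 1%nat 1%nat) (m 1%nat 2%nat) (m 1%nat 3%nat)
                       (m 2%nat 1%nat) (m 2%nat 2%nat) (m 2%nat 3%nat)
                       (m 3%nat 1%nat) (m 3%nat 2%nat) (m 3%nat 3%nat)
  - m 0%nat 1%nat * det3 (m 1%nat 0%nat) (m 1%nat 2%nat) (m 1%nat 3%nat)
                         (m 2%nat 0%nat) (m 2%nat 2%nat) (m 2%nat 3%nat)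
                         (m 3%nat 0%nat) (m 3%nat 2%nat) (m 3%nat 3%nat)
  + m 0%nat 2%nat * det3 (m 1%nat 0%nat) (m 1%nat 1%nat) (m 1%nat 3%nat)
                         (m 2%nat 0%nat) (m 2%nat 1%nat) (m 2%nat 3%nat)
                         (m 3%nat 0%nat) (m 3%nat 1%nat) (m 3%nat 3%nat)
  - m 0%nat 3%nat * det3 (m 1%nat 0%nat) (m 1%nat 1%nat) (m 1%nat 2%nat)
                         (m 2%nat 0%nat) (m 2%nat 1%nat) (m 2%nat 2%nat)
                         (m 3%nat 0%nat) (m 3%nat 1%nat) (m 3%nat 2%nat).

Lemma det4_gram_ip e (f : nat -> nat -> R) :
  det4 (fun i j => ip e (f i) (f j)) = e * det4 f ^ 2.
Proof. unfold det4, det3, ip. ring. Qed.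

Lemma det4_kernel (f : nat -> nat -> R) (z : nat -> R) :
  det4 f <> 0 ->
  (forall i, (i < 4)%nat ->
     f i 0%nat * z 0%nat + f i 1%nat * z 1%nat + f i 2%nat * z 2%nat + f i 3%nat * z 3%nat = 0) ->
  forall k, (k < 4)%nat -> z k = 0.
Proof.
  intros Hd H k Hk.
  apply (Rmult_eq_reg_l (det4 f)); [rewrite Rmult_0_r | exact Hd].
  pose proof (H 0%nat ltac:(lia)) as H0. pose proof (H 1%nat ltac:(lia)) as H1.
  pose proof (H 2%nat ltac:(lia)) as H2. pose proof (H 3%nat ltac:(lia)) as H3.
  pose (r := fun i =>
    f i 0%nat * z 0%nat + f i 1%nat * z 1%nat + f i 2%nat * z 2%nat + f i 3%nat * z 3%nat).
  (* Cramer: replacing column k of f by r = f z multiplies the determinant by z k *)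
  transitivity (det4 (fun i j => if Nat.eqb j k then r i else f i j)).
  all: assert (Ek : k = 0%nat \/ k = 1%nat \/ k = 2%nat \/ k = 3%nat) by lia.
  all: destruct Ek as [-> | [-> | [-> | ->]]]; unfold det4, det3; simpl; unfold r.
  all: try ring.
  all: rewrite H0, H1, H2, H3; ring.
Qed.

Definition frame4 (a b n p : nat -> R) (i : nat) : nat -> R :=
  match i with 0%nat => a | 1%nat => b | 2%nat => n | _ => p end.

Section Frame.

Variables (e : R) (a b n p : nat -> R).
Hypothesis He : e = 1 \/ e = -1.
Hypothesis Hnn : ip e n n = 1.
Hypothesis Hna : ip e n a = 0.
Hypothesis Hnb : ip e n b = 0.
Hypothesis Hnp : ip e n p = 0.
Hypothesis Hpa : ip e p a = 0.
Hypothesis Hpb : ip e p b = 0.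
Hypothesis Hpp : ip e p p = e.
Hypothesis HD : 0 < ip e a a * ip e b b - ip e a b ^ 2.

Lemma frame4_det4_neq0 : det4 (frame4 a b n p) <> 0.
Proof.
  intro H0. pose proof (det4_gram_ip e (frame4 a b n p)) as Hc.
  replace (det4 (fun i j => ip e (frame4 a b n p i) (frame4 a b n p j)))
    with ((ip e a a * ip e b b - ip e a b ^ 2) * e) in Hc.
  - rewrite H0 in Hc.
    assert (Hee : e * e = 1) by (destruct He as [-> | ->]; ring).
    assert (ip e a a * ip e b b - ip e a b ^ 2 = 0)
      by (rewrite <- (Rmult_1_r (_ - _)), <- Hee, <- Rmult_assoc, Hc; ring).
    lra.
  - unfold det4, det3; simpl.
    rewrite (ip_sym e a n), (ip_sym e b n), (ip_sym e a p), (ip_sym e b p),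
            (ip_sym e b a), (ip_sym e p n), Hnn, Hna, Hnb, Hnp, Hpa, Hpb, Hpp.
    ring.
Qed.

Lemma frame4_orthogonal_eq0 Y :
  ip e a Y = 0 -> ip e b Y = 0 -> ip e n Y = 0 -> ip e p Y = 0 ->
  forall k, (k < 4)%nat -> Y k = 0.
Proof.
  intros Ya Yb Yn Yp k Hk.
  (* the weight e of the third coordinate moves into the vector: (Y0, Y1, e Y2, Y3) is in
     the kernel of the frame matrix *)
  assert (HY := det4_kernel (frame4 a b n p)
                  (fun k => match k with 2%nat => e * Y k | _ => Y k end) frame4_det4_neq0).
  assert (H : (match k with 2%nat => e * Y k | _ => Y k end) = 0).
  { apply HY; [|exact Hk]. intros i Hi.
    assert (E : i = 0%nat \/ i = 1%nat \/ i = 2%nat \/ i = 3%nat) by lia.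
    destruct E as [-> | [-> | [-> | ->]]]; simpl.
    - rewrite <- Ya; unfold ip; ring.
    - rewrite <- Yb; unfold ip; ring.
    - rewrite <- Yn; unfold ip; ring.
    - rewrite <- Yp; unfold ip; ring. }
  destruct k as [|[|[|k]]]; auto.
  apply (Rmult_eq_reg_l e); [rewrite H; ring | destruct He; lra].
Qed.

Lemma ip_frame_expansion X W :
  ip e X W = (ip e b b * ip e X a * ip e W a
               - ip e a b * (ip e X a * ip e W b + ip e X b * ip e W a)
               + ip e a a * ip e X b * ip e W b) / (ip e a a * ip e b b - ip e a b ^ 2)
     + ip e X n * ip e W n + e * (ip e X p * ip e W p).
Proof.
  set (D := ip e a a * ip e b b - ip e a b ^ 2) in *.
  set (al := (ip e b b * ip e X a - ip e a b * ip e X b) / D).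
  set (be := (- ip e a b * ip e X a + ip e a a * ip e X b) / D).
  set (ga := ip e X n).
  set (de := e * ip e X p).
  assert (Hee : e * e = 1) by (destruct He as [-> | ->]; ring).
  set (Y := fun k => X k - (al * a k + be * b k + ga * n k + de * p k)).
  assert (Hlin : forall Z, ip e Z Y
    = ip e Z X - (al * ip e Z a + be * ip e Z b + ga * ip e Z n + de * ip e Z p))
    by (intros Z; unfold Y, ip; ring).
  assert (HY : forall k, (k < 4)%nat -> Y k = 0).
  { apply frame4_orthogonal_eq0; rewrite Hlin; unfold al, be, ga, de.
    - rewrite (ip_sym e a X), (ip_sym e a n), (ip_sym e a p), Hna, Hpa. unfold D in *. field. lra.
    - rewrite (ip_sym e b X), (ip_sym e b n), (ip_sym e b p), (ip_sym e b a), Hnb, Hpb.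
      unfold D in *. field. lra.
    - rewrite (ip_sym e n X), Hnn, Hna, Hnb, Hnp. ring.
    - rewrite (ip_sym e p X), (ip_sym e p n), Hnp, Hpa, Hpb, Hpp.
      transitivity (ip e X p * (1 - e * e)); [ring|]. rewrite Hee; ring. }
  assert (HX : forall k, (k < 4)%nat -> X k = al * a k + be * b k + ga * n k + de * p k)
    by (intros k Hk; specialize (HY k Hk); unfold Y in HY; lra).
  transitivity (al * ip e a W + be * ip e b W + ga * ip e n W + de * ip e p W).
  { unfold ip at 1. rewrite (HX 0%nat), (HX 1%nat), (HX 2%nat), (HX 3%nat) by lia.
    unfold ip; ring. }
  unfold al, be, ga, de.
  rewrite (ip_sym e a W), (ip_sym e b W), (ip_sym e n W), (ip_sym e p W).
  unfold D in *. field. lra.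
Qed.

End Frame.

(** * Calculus in two variables *)

Lemma is_derive_eq (f : R -> R) x (d1 d2 : R) : is_derive f x d1 -> d1 = d2 -> is_derive f x d2.
Proof. now intros H <-. Qed.

Lemma is_derive_wdot w c (X Y : nat -> R -> R) x dX dY :
  (forall i, (i < 4)%nat -> is_derive (X i) x (dX i)) ->
  (forall i, (i < 4)%nat -> is_derive (Y i) x (dY i)) ->
  is_derive (fun s => wdot w c (fun i => X i s) (fun i => Y i s)) x
    (wdot w c dX (fun i => Y i x) + wdot w c (fun i => X i x) dY).
Proof.
  intros HX HY.
  assert (M : forall i, (i < 4)%nat ->
    is_derive (fun s => X i s * Y i s) x (dX i * Y i x + X i x * dY i)).
  { intros i Hi. apply (is_derive_mult (X i) (Y i)); auto. intros; apply Rmult_comm. }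
  unfold wdot. eapply is_derive_eq.
  { apply (is_derive_plus (V:=R_NormedModule)). apply (is_derive_plus (V:=R_NormedModule)).
    apply (is_derive_plus (V:=R_NormedModule)).
    - apply M; lia.
    - apply M; lia.
    - apply is_derive_scal; apply M; lia.
    - apply is_derive_scal; apply M; lia. }
  simpl. unfold plus; simpl. ring.
Qed.

Lemma is_derive_det2 (f11 f12 f22 : R -> R) x d11 d12 d22 :
  is_derive f11 x d11 -> is_derive f12 x d12 -> is_derive f22 x d22 ->
  is_derive (fun s => f11 s * f22 s - f12 s ^ 2) x (d11 * f22 x + f11 x * d22 - 2 * f12 x * d12).
Proof.
  intros H1 H2 H3. eapply is_derive_eq.
  - apply (is_derive_minus (V:=R_NormedModule)).
    + apply (is_derive_mult f11 f22 x d11 d22 H1 H3). intros; apply Rmult_comm.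
    + apply (is_derive_ext (fun s => f12 s * f12 s)); [intros; simpl; ring|].
      apply (is_derive_mult f12 f12 x d12 d12 H2 H2). intros; apply Rmult_comm.
  - simpl. unfold minus, plus, opp, mult; simpl. ring.
Qed.

Lemma is_derive_sq_diff4 (f g : R -> R) x df dg : is_derive f x df -> is_derive g x dg ->
  is_derive (fun s => (f s ^ 2 - g s ^ 2) / 4) x ((2 * f x * df - 2 * g x * dg) / 4).
Proof.
  intros Hf Hg.
  apply (is_derive_ext (fun s => / 4 * (f s * f s - g s * g s))); [intros; simpl; field|].
  eapply is_derive_eq.
  - apply is_derive_scal. apply (is_derive_minus (V:=R_NormedModule)).
    + apply (is_derive_mult f f x df df Hf Hf). intros; apply Rmult_comm.
    + apply (is_derive_mult g g x dg dg Hg Hg). intros; apply Rmult_comm.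
  - simpl. unfold minus, plus, opp, mult; simpl. field.
Qed.

Lemma is_derive_neg_half_mult (f g : R -> R) x df dg : is_derive f x df -> is_derive g x dg ->
  is_derive (fun s => - (f s * g s) / 2) x (- (df * g x + f x * dg) / 2).
Proof.
  intros Hf Hg.
  apply (is_derive_ext (fun s => (- / 2) * (f s * g s))); [intros; simpl; field|].
  eapply is_derive_eq.
  - apply is_derive_scal. apply (is_derive_mult f g x df dg Hf Hg). intros; apply Rmult_comm.
  - simpl. unfold plus, mult; simpl. field.
Qed.

Lemma is_derive_sub_div (f g : R -> R) x df dg c : is_derive f x df -> is_derive g x dg ->
  is_derive (fun s => (f s - g s) / c) x ((df - dg) / c).
Proof.
  intros Hf Hg.
  apply (is_derive_ext (fun s => / c * (f s - g s))); [intros; simpl; unfold Rdiv; ring|].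
  eapply is_derive_eq.
  - apply is_derive_scal. apply (is_derive_minus (V:=R_NormedModule)); eauto.
  - simpl. unfold minus, plus, opp; simpl. unfold Rdiv; ring.
Qed.

Lemma is_derive_opp_div (f : R -> R) x df c : is_derive f x df ->
  is_derive (fun s => - f s / c) x (- df / c).
Proof.
  intros Hf. apply (is_derive_ext (fun s => (- / c) * f s)); [intros; simpl; unfold Rdiv; ring|].
  eapply is_derive_eq; [apply is_derive_scal; exact Hf | simpl; unfold Rdiv; ring].
Qed.

Lemma dpart_pu ds f : dpart ds (pu f) = dpart (ds ++ true :: nil) f.
Proof. induction ds as [|d ds IH]; simpl; [reflexivity|]. now rewrite IH. Qed.

Lemma dpart_pv ds f : dpart ds (pv f) = dpart (ds ++ false :: nil) f.
Proof. induction ds as [|d ds IH]; simpl; [reflexivity|]. now rewrite IH. Qed.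

Lemma smooth_on_pu U f : smooth_on U f -> smooth_on U (pu f).
Proof. intros H ds u v Hu. rewrite dpart_pu. now apply H. Qed.

Lemma smooth_on_pv U f : smooth_on U f -> smooth_on U (pv f).
Proof. intros H ds u v Hu. rewrite dpart_pv. now apply H. Qed.

Lemma smooth_is_derive_u U f u v :
  smooth_on U f -> U (u, v) -> is_derive (fun s => f s v) u (pu f u v).
Proof. intros H Hu. apply Derive_correct, (H nil u v Hu). Qed.

Lemma smooth_is_derive_v U f u v :
  smooth_on U f -> U (u, v) -> is_derive (fun t => f u t) v (pv f u v).
Proof. intros H Hu. apply Derive_correct, (H nil u v Hu). Qed.

Lemma open_locally_2d (U : R * R -> Prop) u v :
  open U -> U (u, v) -> locally_2d (fun a b => U (a, b)) u v.
Proof.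
  intros HU Hu. apply locally_2d_locally.
  generalize (HU (u, v) Hu). apply filter_imp. now intros [a b].
Qed.

Lemma open_locally_u (U : R * R -> Prop) u v :
  open U -> U (u, v) -> locally u (fun s => U (s, v)).
Proof.
  intros HU Hu. apply (locally_2d_1d_const_y (fun a b => U (a, b))). now apply open_locally_2d.
Qed.

Lemma open_locally_v (U : R * R -> Prop) u v :
  open U -> U (u, v) -> locally v (fun t => U (u, t)).
Proof.
  intros HU Hu. apply (locally_2d_1d_const_x (fun a b => U (a, b))). now apply open_locally_2d.
Qed.

Lemma smooth_schwarz U f u v :
  open U -> smooth_on U f -> U (u, v) -> pu (pv f) u v = pv (pu f) u v.
Proof.
  intros HU Hf Hu. unfold pu, pv. apply Schwarz.
  - apply locally_2d_impl with (2 := open_locally_2d U u v HU Hu).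
    apply locally_2d_forall. intros a b Hab.
    destruct (Hf nil a b Hab) as [H1 [H2 _]].
    destruct (Hf (false :: nil) a b Hab) as [H3 _].
    destruct (Hf (true :: nil) a b Hab) as [_ [H4 _]].
    simpl in *. unfold pu, pv in *. auto.
  - apply continuity_2d_pt_filterlim, (Hf (true :: false :: nil) u v Hu).
  - apply continuity_2d_pt_filterlim, (Hf (false :: true :: nil) u v Hu).
Qed.

Lemma smooth_schwarz_vv U f u v :
  open U -> smooth_on U f -> U (u, v) -> pu (pv (pv f)) u v = pv (pv (pu f)) u v.
Proof.
  intros HU Hf Hu.
  rewrite (smooth_schwarz U (pv f) u v HU (smooth_on_pv U f Hf) Hu).
  unfold pv at 1 2. apply Derive_ext_loc.
  generalize (open_locally_v U u v HU Hu). apply filter_imp. intros t Ht.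
  now apply (smooth_schwarz U).
Qed.

Lemma is_derive_const_on_u (U : R * R -> Prop) (f : R -> R -> R) c u v d :
  open U -> (forall a b, U (a, b) -> f a b = c) -> U (u, v) ->
  is_derive (fun s => f s v) u d -> d = 0.
Proof.
  intros HU Hc Hu Hd. rewrite <- (is_derive_unique _ _ _ Hd).
  rewrite (Derive_ext_loc _ (fun _ => c)); [apply Derive_const|].
  generalize (open_locally_u U u v HU Hu). apply filter_imp. intros s Hs. now apply Hc.
Qed.

Lemma is_derive_const_on_v (U : R * R -> Prop) (f : R -> R -> R) c u v d :
  open U -> (forall a b, U (a, b) -> f a b = c) -> U (u, v) ->
  is_derive (fun t => f u t) v d -> d = 0.
Proof.
  intros HU Hc Hu Hd. rewrite <- (is_derive_unique _ _ _ Hd).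
  rewrite (Derive_ext_loc _ (fun _ => c)); [apply Derive_const|].
  generalize (open_locally_v U u v HU Hu). apply filter_imp. intros t Ht. now apply Hc.
Qed.

Lemma is_derive_wdot_u w c U (X Y : nat -> R -> R -> R) u v :
  (forall i, (i < 4)%nat -> smooth_on U (X i)) ->
  (forall i, (i < 4)%nat -> smooth_on U (Y i)) -> U (u, v) ->
  is_derive (fun s => wdot w c (pt X s v) (pt Y s v)) u
    (wdot w c (Du X u v) (pt Y u v) + wdot w c (pt X u v) (Du Y u v)).
Proof.
  intros HX HY Huv. apply (is_derive_wdot w c (fun i s => X i s v) (fun i s => Y i s v));
    intros i Hi; apply (smooth_is_derive_u U); auto.
Qed.

Lemma is_derive_wdot_v w c U (X Y : nat -> R -> R -> R) u v :
  (forall i, (i < 4)%nat -> smooth_on U (X i)) ->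
  (forall i, (i < 4)%nat -> smooth_on U (Y i)) -> U (u, v) ->
  is_derive (fun t => wdot w c (pt X u t) (pt Y u t)) v
    (wdot w c (Dv X u v) (pt Y u v) + wdot w c (pt X u v) (Dv Y u v)).
Proof.
  intros HX HY Huv. apply (is_derive_wdot w c (fun i t => X i u t) (fun i t => Y i u t));
    intros i Hi; apply (smooth_is_derive_v U); auto.
Qed.

Lemma wdot_const_on_u w c U (X Y : nat -> R -> R -> R) k u v : open U ->
  (forall i, (i < 4)%nat -> smooth_on U (X i)) ->
  (forall i, (i < 4)%nat -> smooth_on U (Y i)) ->
  (forall a b, U (a, b) -> wdot w c (pt X a b) (pt Y a b) = k) -> U (u, v) ->
  wdot w c (Du X u v) (pt Y u v) + wdot w c (pt X u v) (Du Y u v) = 0.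
Proof.
  intros HU HX HY Hk Huv.
  exact (is_derive_const_on_u U (fun a b => wdot w c (pt X a b) (pt Y a b)) k u v _ HU Hk Huv
           (is_derive_wdot_u w c U X Y u v HX HY Huv)).
Qed.

Lemma wdot_const_on_v w c U (X Y : nat -> R -> R -> R) k u v : open U ->
  (forall i, (i < 4)%nat -> smooth_on U (X i)) ->
  (forall i, (i < 4)%nat -> smooth_on U (Y i)) ->
  (forall a b, U (a, b) -> wdot w c (pt X a b) (pt Y a b) = k) -> U (u, v) ->
  wdot w c (Dv X u v) (pt Y u v) + wdot w c (pt X u v) (Dv Y u v) = 0.
Proof.
  intros HU HX HY Hk Huv.
  exact (is_derive_const_on_v U (fun a b => wdot w c (pt X a b) (pt Y a b)) k u v _ HU Hk Huv
           (is_derive_wdot_v w c U X Y u v HX HY Huv)).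
Qed.

(** * The functions g and chi *)

Definition gformula eps K x :=
  (x ^ 2 - 1 + eps * K * (exp (eps * (1 - x ^ 2) / K) - 1)) / ((1 - x ^ 2) ^ 2).

Lemma locally_1_minus_sq_neq0 nu : 1 - nu ^ 2 <> 0 -> locally nu (fun x => 1 - x ^ 2 <> 0).
Proof.
  intros H.
  assert (Hc : continuity_pt (fun x => 1 - x ^ 2) nu) by (apply derivable_continuous_pt; reg).
  pose proof (proj1 (continuity_pt_locally _ _) Hc (mkposreal _ (Rabs_pos_lt _ H))) as Hl.
  eapply filter_imp; [|exact Hl]. simpl. intros x Hx Hx0. rewrite Hx0 in Hx.
  rewrite Rminus_0_l, Rabs_Ropp in Hx. lra.
Qed.

Lemma gfun_locally_gformula eps K nu :
  1 - nu ^ 2 <> 0 -> locally nu (fun x => gformula eps K x = gfun eps K x).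
Proof.
  intros H. eapply filter_imp; [|exact (locally_1_minus_sq_neq0 nu H)]. intros x Hx.
  unfold gfun, gformula. destruct (Req_EM_T (1 - x ^ 2) 0); [contradiction | reflexivity].
Qed.

Lemma gfun_ex_derive eps K nu : 0 < K -> 1 - nu ^ 2 <> 0 -> ex_derive (gfun eps K) nu.
Proof.
  intros HK Hs. apply (ex_derive_ext_loc (gformula eps K)); [now apply gfun_locally_gformula|].
  unfold gformula. auto_derive. intro C. apply Hs. nra.
Qed.

(* At s = 0 the left side vanishes whatever Derive returns there, and
   g(+-1) = eps/(2K) makes the right side vanish. *)
Lemma gfun_ode eps K nu : eps = 1 \/ eps = -1 -> 0 < K ->
  let s := 1 - nu ^ 2 in
  Derive (gfun eps K) nu * s / 2
    = 2 * gfun eps K nu * nu - eps * nu / K - eps * gfun eps K nu * nu * s / K.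
Proof.
  intros He HK s.
  destruct (Req_EM_T s 0) as [Hs|Hs].
  - unfold gfun. fold s. destruct (Req_EM_T s 0) as [_|C]; [|contradiction].
    rewrite Hs. field. lra.
  - set (E := exp (eps * s / K)).
    assert (Hd : is_derive (gformula eps K) nu
      ((2 * nu + eps * K * (E * (eps * (- (2 * nu)) / K))) / s ^ 2
       - (- s + eps * K * (E - 1)) * (2 * s * (- (2 * nu))) / (s ^ 2) ^ 2)).
    { unfold gformula. auto_derive.
      - intro C. apply Hs. unfold s. nra.
      - unfold E, s in *.
        replace (eps * (1 + - (nu * (nu * 1))) * / K) with (eps * (1 - nu ^ 2) / K) by (field; lra).
        field. split; [lra|]. intro C; apply Hs. nra. }
    rewrite <- (Derive_ext_loc _ _ _ (gfun_locally_gformula eps K nu Hs)),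
            (is_derive_unique _ _ _ Hd).
    unfold gfun. fold s. fold E. destruct (Req_EM_T s 0); [contradiction|].
    replace (nu ^ 2 - 1) with (- s) by (unfold s; ring).
    destruct He as [-> | ->]; field; split; auto; lra.
Qed.

Lemma chifun_gfun eps K nu : chifun eps K nu = 1 + gfun eps K nu * (1 - nu ^ 2).
Proof.
  unfold chifun, gfun.
  destruct (Req_EM_T (1 - nu ^ 2) 0) as [Hs|Hs]; [rewrite Hs; ring | field; auto].
Qed.

Lemma chifun_pos eps K nu : eps = 1 \/ eps = -1 -> 0 < K -> 0 < chifun eps K nu.
Proof.
  intros He HK. unfold chifun.
  destruct (Req_EM_T (1 - nu ^ 2) 0) as [Hs|Hs]; [lra|].
  set (s := 1 - nu ^ 2) in *. set (y := eps * s / K).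
  assert (Hy : y <> 0).
  { unfold y. intro C. apply Hs.
    apply (Rmult_eq_compat_r K) in C. destruct He as [-> | ->]; field_simplify in C; lra. }
  replace (eps * K * (exp y - 1) / s) with ((exp y - 1) / y)
    by (unfold y; destruct He as [-> | ->]; field; split; lra).
  pose proof (exp_ineq1 y Hy).
  destruct (Rlt_or_le 0 y) as [Hp|Hn]; [apply Rdiv_lt_0_compat; lra|].
  assert (exp y < 1) by (rewrite <- exp_0; apply exp_increasing; lra).
  replace ((exp y - 1) / y) with ((1 - exp y) / (- y)) by (field; auto).
  apply Rdiv_lt_0_compat; lra.
Qed.

Lemma exp_sub_tangent_bound y : Rabs y <= 1 / 2 -> 0 <= exp y - 1 - y <= 2 * y ^ 2.
Proof.
  intros Hy. pose proof (Rle_abs y). pose proof (Rle_abs (- y)). rewrite Rabs_Ropp in *.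
  split; [pose proof (exp_ineq1_le y); lra|].
  pose proof (exp_ineq1_le (- y)) as H1.
  assert (E : exp y * exp (- y) = 1)
    by (rewrite <- exp_plus; replace (y + - y) with 0 by ring; apply exp_0).
  assert (Hp : 0 < exp y) by apply exp_pos.
  assert (exp y <= 1 / (1 - y)).
  { apply (Rmult_le_reg_r (1 - y)); [lra|]. field_simplify; [nra | lra]. }
  assert (1 / (1 - y) - 1 - y <= 2 * y ^ 2).
  { replace (1 / (1 - y) - 1 - y) with (y ^ 2 / (1 - y)) by (field; lra).
    apply (Rmult_le_reg_r (1 - y)); [lra|]. field_simplify; [nra | lra]. }
  lra.
Qed.

Lemma gfun_bound eps K x : eps = 1 \/ eps = -1 -> 0 < K ->
  Rabs (1 - x ^ 2) <= K / 2 -> Rabs (gfun eps K x) <= 2 / K.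
Proof.
  intros He HK Hs.
  assert (Heps : Rabs eps = 1)
    by (destruct He as [-> | ->]; [apply Rabs_R1 | rewrite Rabs_left; lra]).
  unfold gfun. destruct (Req_EM_T (1 - x ^ 2) 0) as [E|E].
  - rewrite Rabs_div by lra. rewrite Heps, (Rabs_right (2 * K)) by lra.
    apply (Rmult_le_reg_r (2 * K)); [lra|]. field_simplify; lra.
  - set (s := 1 - x ^ 2) in *. set (y := eps * s / K).
    assert (Hsy : s = eps * K * y) by (unfold y; destruct He as [-> | ->]; field; lra).
    assert (Hyb : Rabs y <= 1 / 2).
    { unfold y. rewrite Rabs_div, Rabs_mult, Heps, (Rabs_right K) by lra.
      apply (Rmult_le_reg_r K); auto. field_simplify; lra. }
    assert (Hy0 : y <> 0) by (intro C; apply E; rewrite Hsy, C; ring).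
    replace ((x ^ 2 - 1 + eps * K * (exp y - 1)) / s ^ 2)
      with (eps * (exp y - 1 - y) / (K * y ^ 2))
      by (replace (x ^ 2 - 1) with (- s) by (unfold s; ring); rewrite Hsy;
          destruct He as [-> | ->]; field; split; lra).
    destruct (exp_sub_tangent_bound y Hyb) as [B1 B2].
    assert (Hy2 : 0 < y ^ 2) by (apply pow2_gt_0; auto).
    rewrite Rabs_div, Rabs_mult, Heps, (Rabs_right (K * y ^ 2)), (Rabs_right (exp y - 1 - y))
      by nra.
    apply (Rmult_le_reg_r (K * y ^ 2)); [nra|]. field_simplify; nra.
Qed.

Lemma is_derive_mult_bounded_flat (G H : R -> R) u M :
  locally u (fun s => Rabs (G s) <= M) -> H u = 0 -> is_derive H u 0 ->
  is_derive (fun s => G s * H s) u 0.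
Proof.
  intros [d1 Hb] H0 HH. apply is_derive_Reals. apply is_derive_Reals in HH.
  intros e He.
  assert (HM : 0 <= M).
  { pose proof (Hb u (ball_center u d1)). pose proof (Rabs_pos (G u)). lra. }
  assert (He' : 0 < e / (M + 1)) by (apply Rdiv_lt_0_compat; lra).
  destruct (HH _ He') as [d2 Hd2].
  assert (Hd : 0 < Rmin d1 d2) by (apply Rmin_pos; apply cond_pos).
  exists (mkposreal _ Hd). intros h Hh0 Hh. simpl in Hh.
  assert (h1 : Rabs h < d1) by (eapply Rlt_le_trans; [exact Hh | apply Rmin_l]).
  assert (h2 : Rabs h < d2) by (eapply Rlt_le_trans; [exact Hh | apply Rmin_r]).
  specialize (Hd2 h Hh0 h2). rewrite H0 in *.
  rewrite Rmult_0_r, Rminus_0_r, Rminus_0_r in *.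
  replace (G (u + h) * H (u + h) / h) with (G (u + h) * (H (u + h) / h)) by (field; auto).
  rewrite Rabs_mult.
  assert (Hg : Rabs (G (u + h)) <= M).
  { apply Hb. unfold ball; simpl; unfold AbsRing_ball, abs, minus, plus, opp; simpl.
    replace (u + h + - u) with h by ring. exact h1. }
  assert (Rabs (G (u + h)) * Rabs (H (u + h) / h) <= M * (e / (M + 1)))
    by (apply Rmult_le_compat; auto using Rabs_pos; lra).
  assert (M * (e / (M + 1)) < e) by (apply (Rmult_lt_reg_r (M + 1)); [lra|]; field_simplify; lra).
  lra.
Qed.

(* At the poles nu = +-1 the piecewise definition of gfun provides no derivative;
   there H has to vanish to first order. *)
Lemma is_derive_gfun_comp_mult eps K (nu H : R -> R) u (dnu dH : R) :
  eps = 1 \/ eps = -1 -> 0 < K ->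
  is_derive nu u dnu -> is_derive H u dH ->
  1 - nu u ^ 2 <> 0 \/ (H u = 0 /\ dH = 0) ->
  is_derive (fun s => gfun eps K (nu s) * H s) u
    (Derive (gfun eps K) (nu u) * dnu * H u + gfun eps K (nu u) * dH).
Proof.
  intros He HK Hn HH Hor.
  destruct (Req_dec (1 - nu u ^ 2) 0) as [Z|Hs].
  - destruct Hor as [C | [H0 Hd0]]; [contradiction|].
    rewrite H0, Hd0, Rmult_0_r, Rmult_0_r, Rplus_0_r. subst dH.
    apply (is_derive_mult_bounded_flat _ H u (2 / K)); auto.
    assert (Hc : continuity_pt (fun s => 1 - nu s ^ 2) u).
    { assert (Hex : ex_derive (fun s => 1 - nu s ^ 2) u) by (auto_derive; now exists dnu).
      apply continuity_pt_filterlim.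
      exact (@ex_derive_continuous R_AbsRing R_NormedModule _ u Hex). }
    assert (HK2 : 0 < K / 2) by lra.
    pose proof (proj1 (continuity_pt_locally _ _) Hc (mkposreal _ HK2)) as Hl.
    eapply filter_imp; [|exact Hl]. intros x Hx. simpl in Hx.
    apply gfun_bound; auto. simpl in Z |- *. rewrite Z, Rminus_0_r in Hx. lra.
  - eapply is_derive_eq.
    + apply (is_derive_mult (fun s => gfun eps K (nu s)) H);
        [| exact HH | intros; apply Rmult_comm].
      apply (is_derive_comp (gfun eps K) nu); [|exact Hn].
      now apply Derive_correct, gfun_ex_derive.
    + simpl. unfold plus, mult, scal; simpl. unfold mult; simpl. ring.
Qed.

Lemma is_derive_plus_gfun_mult eps K (E nu H : R -> R) x (dE dnu dH : R) :
  eps = 1 \/ eps = -1 -> 0 < K ->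
  is_derive E x dE -> is_derive nu x dnu -> is_derive H x dH ->
  1 - nu x ^ 2 <> 0 \/ (H x = 0 /\ dH = 0) ->
  is_derive (fun s => E s + gfun eps K (nu s) * H s) x
    (dE + (Derive (gfun eps K) (nu x) * dnu * H x + gfun eps K (nu x) * dH)).
Proof.
  intros He HK HE Hn HH Hor.
  apply (is_derive_plus (V:=R_NormedModule)); [exact HE|].
  now apply is_derive_gfun_comp_mult.
Qed.

Lemma codazzi_solve (e K L g11 g12 g22 hu hv nu G111 G112 G121 G122 G221 G222 : R) :
  let D := g11 * g22 - g12 ^ 2 in
  D <> 0 -> L <> 0 -> L ^ 2 = K * D ->
  2 * L * ((L * (g12 * G222 - g22 * G221) / D - e * (g22 - hv ^ 2) * (nu * hu))
           - (L * (g12 * G121 - g11 * G122) / D - e * (g12 - hu * hv) * (nu * hv)))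
    = K * (2 * G111 * g22 + 2 * g11 * G122 - 2 * g12 * (G112 + G121)) ->
  2 * L * ((L * (g12 * G111 - g11 * G112) / D - e * (g11 - hu ^ 2) * (nu * hv))
           - (L * (g12 * G122 - g22 * G121) / D - e * (g12 - hu * hv) * (nu * hu)))
    = K * (2 * G121 * g22 + 2 * g11 * G222 - 2 * g12 * (G122 + G221)) ->
  G221 = - e * nu * hu * D / L - G111 /\ G222 = - e * nu * hv * D / L - G112.
Proof.
  intros D HD HL HK HU HV.
  replace K with (L ^ 2 / D) in HU, HV by (rewrite HK; field; auto).
  apply Rminus_diag_eq in HU, HV.
  match type of HU with ?x = 0 => set (EU := x) in HU end.
  match type of HV with ?x = 0 => set (EV := x) in HV end.
  assert (HL2 : - 2 * L ^ 2 <> 0) by (intro C; apply HL; nra).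
  (* the combinations g11 EU + g12 EV and g12 EU + g22 EV isolate G221 and G222 *)
  split; apply Rminus_diag_uniq, (Rmult_eq_reg_r (- 2 * L ^ 2)); auto; rewrite Rmult_0_l.
  - transitivity (g11 * EU + g12 * EV); [|rewrite HU, HV; ring].
    unfold EU, EV. unfold D in *. field. auto.
  - transitivity (g12 * EU + g22 * EV); [|rewrite HU, HV; ring].
    unfold EU, EV. unfold D in *. field. auto.
Qed.

Lemma definite_quadratic_eq0 p q r x y :
  0 < p * r - q ^ 2 -> r * x ^ 2 - 2 * q * x * y + p * y ^ 2 = 0 -> x = 0 /\ y = 0.
Proof.
  intros Hd H.
  assert (Hp : p <> 0) by (intro C; subst p; nra).
  assert (E : (p * y - q * x) ^ 2 + (p * r - q ^ 2) * x ^ 2 = 0)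
    by (rewrite <- (Rmult_0_r p), <- H; ring).
  pose proof (pow2_ge_0 (p * y - q * x)). pose proof (pow2_ge_0 x).
  assert (Hx : x * x = 0) by nra. apply Rmult_integral in Hx.
  assert (Hx' : x = 0) by tauto. split; [exact Hx'|]. subst x.
  assert (Hy : (p * y) * (p * y) = 0) by nra. apply Rmult_integral in Hy.
  destruct Hy as [Hy | Hy]; apply Rmult_integral in Hy; tauto.
Qed.

Definition im_conj_sq_mul (h q : C) : R := snd (Cmult (Cmult (Cconj h) (Cconj h)) q).

(* The ODE for g is exactly what cancels every term of Q_zbar not proportional to
   Im(conj(h_z)^2 Q); the residual below vanishes by the ODE and |grad h|^2 = s. *)
Lemma Qzbar_reduction (e K L g11 g12 g22 hu hv nu g gp G111 G112 G121 G122 G221 G222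
    huu huv hvv nuu nuv Qr_u Qr_v Qi_u Qi_v : R) (h q : C) :
  let D := g11 * g22 - g12 ^ 2 in
  let s := 1 - nu ^ 2 in
  0 < D -> L <> 0 -> L ^ 2 = K * D ->
  gp * s / 2 = 2 * g * nu - e * nu / K - e * g * nu * s / K ->
  s * D = g22 * hu ^ 2 - 2 * g12 * hu * hv + g11 * hv ^ 2 ->
  G221 = - e * nu * hu * D / L - G111 -> G222 = - e * nu * hv * D / L - G112 ->
  huu = (g22 * G111 * hu - g12 * (G111 * hv + G112 * hu) + g11 * G112 * hv) / D + L * nu ->
  huv = (g22 * G121 * hu - g12 * (G121 * hv + G122 * hu) + g11 * G122 * hv) / D ->
  hvv = (g22 * G221 * hu - g12 * (G221 * hv + G222 * hu) + g11 * G222 * hv) / D + L * nu ->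
  nuu = - L * (g22 * hu - g12 * hv) / D ->
  nuv = - L * (g11 * hv - g12 * hu) / D ->
  Qr_u = (2 * G111 - 2 * G122) / 4
         + (gp * nuu * ((hu ^ 2 - hv ^ 2) / 4) + g * ((2 * hu * huu - 2 * hv * huv) / 4)) ->
  Qr_v = (2 * G121 - 2 * G222) / 4
         + (gp * nuv * ((hu ^ 2 - hv ^ 2) / 4) + g * ((2 * hu * huv - 2 * hv * hvv) / 4)) ->
  Qi_u = - (G112 + G121) / 2
         + (gp * nuu * (- (hu * hv) / 2) + g * (- (huu * hv + hu * huv) / 2)) ->
  Qi_v = - (G122 + G221) / 2
         + (gp * nuv * (- (hu * hv) / 2) + g * (- (huv * hv + hu * hvv) / 2)) ->
  h = (hu / 2, - hv / 2) ->
  q = ((g11 - g22) / 4 + g * ((hu ^ 2 - hv ^ 2) / 4), - g12 / 2 + g * (- (hu * hv) / 2)) ->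
  ((Qr_u - Qi_v) / 2, (Qi_u + Qr_v) / 2)
    = Cmult (0, - 2 * K * gp * im_conj_sq_mul h q / L) h.
Proof.
  intros D s HD HL HK Hode Hgrad Hc1 Hc2 Huu Huv Hvv Hnu Hnv Hru Hrv Hiu Hiv -> ->.
  assert (HK' : K = L ^ 2 / D) by (rewrite HK; field; lra).
  set (R0 := 2 * g * nu - e * nu / K - e * g * nu * s / K - gp * s / 2
             - (gp / (2 * D) + e * g * nu / (K * D))
               * ((g22 * hu ^ 2 - 2 * g12 * hu * hv + g11 * hv ^ 2) - D * s)).
  assert (HR0 : R0 = 0) by (unfold R0; rewrite <- Hgrad; lra).
  unfold im_conj_sq_mul, Cmult, Cconj; simpl. f_equal.
  - transitivity ((Qr_u - Qi_v) / 2 - hu * L / 4 * R0); [rewrite HR0; ring|].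
    subst. unfold R0, s, D in *. field. lra.
  - transitivity ((Qi_u + Qr_v) / 2 + hv * L / 4 * R0); [rewrite HR0; ring|].
    subst. unfold R0, s, D in *. field. lra.
Qed.

Lemma Cmod_sq (z : C) : Cmod z ^ 2 = fst z ^ 2 + snd z ^ 2.
Proof.
  unfold Cmod. rewrite pow2_sqrt; [reflexivity|].
  apply Rplus_le_le_0_compat; apply pow2_ge_0.
Qed.

(* q = E + g h^2 is the (2,0)-part of A = I + g dh^2 and 1 + g s = det A / det I; the
   bound comes from the Lagrange-type identity E below. *)
Lemma im_conj_sq_mul_bound (g11 g12 g22 g s : R) (h q : C) :
  let D := g11 * g22 - g12 ^ 2 in
  0 < D -> 0 < 1 + g * s ->
  s * D = 4 * (g22 * fst h ^ 2 + 2 * g12 * fst h * snd h + g11 * snd h ^ 2) ->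
  q = ((g11 - g22) / 4 + g * (fst h ^ 2 - snd h ^ 2), - g12 / 2 + g * (2 * fst h * snd h)) ->
  16 * (1 + g * s) * im_conj_sq_mul h q ^ 2 <= D * s ^ 2 * Cmod q ^ 2.
Proof.
  intros D HD Hchi Hs ->. rewrite Cmod_sq. destruct h as [X Y]. cbn [fst snd] in Hs |- *.
  unfold im_conj_sq_mul, Cmult, Cconj; cbn [fst snd].
  set (qr := (g11 - g22) / 4 + g * (X ^ 2 - Y ^ 2)).
  set (qi := - g12 / 2 + g * (2 * X * Y)).
  set (Q4 := 4 * (g22 * X ^ 2 + 2 * g12 * X * Y + g11 * Y ^ 2)) in Hs.
  set (m := (X * X - - Y * - Y) * qi + (X * - Y + - Y * X) * qr).
  assert (Key : 16 * (D + g * Q4) * m ^ 2 <= Q4 ^ 2 * (qr ^ 2 + qi ^ 2)).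
  { set (P := (g11 + g22) / 4 + g * (X ^ 2 + Y ^ 2)).
    set (r := qr * (X ^ 2 - Y ^ 2) + qi * (2 * X * Y)).
    assert (E : Q4 ^ 2 * (qr ^ 2 + qi ^ 2) - 16 * (D + g * Q4) * m ^ 2
                = 64 * (P * r - (qr ^ 2 + qi ^ 2) * (X ^ 2 + Y ^ 2)) ^ 2)
      by (unfold P, r, m, qr, qi, Q4, D; field).
    pose proof (pow2_ge_0 (P * r - (qr ^ 2 + qi ^ 2) * (X ^ 2 + Y ^ 2))). lra. }
  apply (Rmult_le_reg_l D); [exact HD|].
  replace (D * (16 * (1 + g * s) * m ^ 2)) with (16 * (D + g * Q4) * m ^ 2)
    by (rewrite <- Hs; ring).
  replace (D * (D * s ^ 2 * (qr ^ 2 + qi ^ 2))) with (Q4 ^ 2 * (qr ^ 2 + qi ^ 2))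
    by (rewrite <- Hs; ring).
  exact Key.
Qed.

Lemma scaled_square_bound (K L D chi gp m s w q2 : R) :
  0 < K -> 0 < D -> 0 < chi -> L ^ 2 = K * D -> 0 <= w ->
  16 * chi * m ^ 2 <= D * s ^ 2 * q2 ->
  (- 2 * K * gp * m / L) ^ 2 * w <= K * gp ^ 2 * s ^ 2 * w / (4 * chi) * q2.
Proof.
  intros HK HD Hchi HL Hw Hm.
  assert (HL0 : L <> 0) by (intro C; subst L; nra).
  replace ((- 2 * K * gp * m / L) ^ 2) with (4 * K ^ 2 * gp ^ 2 * m ^ 2 / L ^ 2) by (field; auto).
  rewrite HL.
  replace (4 * K ^ 2 * gp ^ 2 * m ^ 2 / (K * D) * w)
    with (K * gp ^ 2 * w / (4 * chi * D) * (16 * chi * m ^ 2))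
    by (field; lra).
  replace (K * gp ^ 2 * s ^ 2 * w / (4 * chi) * q2)
    with (K * gp ^ 2 * w / (4 * chi * D) * (D * s ^ 2 * q2))
    by (field; lra).
  apply Rmult_le_compat_l; [|exact Hm].
  apply Rmult_le_pos; [apply Rmult_le_pos; [nra | exact Hw] | apply Rlt_le, Rinv_0_lt_compat; nra].
Qed.

(** * The chart *)

Section Chart.

Variables (eps K : R) (U : R * R -> Prop) (psi N : nat -> R -> R -> R).
Hypothesis Heps : eps = 1 \/ eps = -1.
Hypothesis HK : 0 < K.
Hypothesis Hchart : cec_chart eps K U psi N.

Local Notation dot := (wdot eps 1).
Local Notation dot3 := (wdot eps 0).

Lemma chart_open : open U.
Proof. exact (proj1 Hchart). Qed.

Lemma smooth_psi i : (i < 4)%nat -> smooth_on U (psi i).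
Proof. intros Hi. exact (proj1 (proj1 (proj2 Hchart) i Hi)). Qed.

Lemma smooth_N i : (i < 4)%nat -> smooth_on U (N i).
Proof. intros Hi. exact (proj2 (proj1 (proj2 Hchart) i Hi)). Qed.

Lemma smooth_psi_u i : (i < 4)%nat -> smooth_on U (pu (psi i)).
Proof. intros Hi. apply smooth_on_pu, smooth_psi, Hi. Qed.

Lemma smooth_psi_v i : (i < 4)%nat -> smooth_on U (pv (psi i)).
Proof. intros Hi. apply smooth_on_pv, smooth_psi, Hi. Qed.

Lemma smooth_hgt : smooth_on U (hgt psi).
Proof. apply smooth_psi. lia. Qed.

Lemma smooth_nuf : smooth_on U (nuf N).
Proof. apply smooth_N. lia. Qed.

Local Hint Resolve chart_open smooth_psi smooth_N smooth_psi_u smooth_psi_v smooth_hgt smooth_nuf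
  smooth_on_pu smooth_on_pv : core.

Lemma psi_on_M2 a b : U (a, b) -> dot3 (pt psi a b) (pt psi a b) = eps.
Proof.
  intros H. destruct (proj2 (proj2 Hchart) a b H) as [E _].
  rewrite <- E at 2. unfold wdot, pt. ring.
Qed.

Lemma N_unit a b : U (a, b) -> dot (pt N a b) (pt N a b) = 1.
Proof.
  intros H. destruct (proj2 (proj2 Hchart) a b H) as [_ [_ [_ [E _]]]].
  now rewrite ip_wdot in E.
Qed.

Lemma N_tangent_M2 a b : U (a, b) -> dot3 (pt N a b) (pt psi a b) = 0.
Proof.
  intros H. destruct (proj2 (proj2 Hchart) a b H) as [_ [_ [_ [_ [E _]]]]].
  transitivity (N 0%nat a b * psi 0%nat a b + N 1%nat a b * psi 1%nat a b
    + eps * (N 2%nat a b * psi 2%nat a b)); [unfold wdot, pt; ring | exact E].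
Qed.

Lemma N_perp_u a b : U (a, b) -> dot (pt N a b) (Du psi a b) = 0.
Proof.
  intros H. destruct (proj2 (proj2 Hchart) a b H) as [_ [_ [_ [_ [_ [E _]]]]]].
  now rewrite ip_wdot in E.
Qed.

Lemma N_perp_v a b : U (a, b) -> dot (pt N a b) (Dv psi a b) = 0.
Proof.
  intros H. destruct (proj2 (proj2 Hchart) a b H) as [_ [_ [_ [_ [_ [_ [E _]]]]]]].
  now rewrite ip_wdot in E.
Qed.

Lemma II_conformal a b : U (a, b) ->
  dot (Dvv psi a b) (pt N a b) = dot (Duu psi a b) (pt N a b)
  /\ dot (Duv psi a b) (pt N a b) = 0.
Proof.
  intros H.
  destruct (proj2 (proj2 Hchart) a b H) as [_ [_ [_ [_ [_ [_ [_ [_ [_ [_ [E1 E2]]]]]]]]]]].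
  unfold II11, II22, II12 in E1, E2. rewrite !ip_wdot in E1. rewrite ip_wdot in E2.
  split; [symmetry|]; assumption.
Qed.

Lemma extrinsic_curvature a b : U (a, b) ->
  dot (Duu psi a b) (pt N a b) * dot (Dvv psi a b) (pt N a b) - dot (Duv psi a b) (pt N a b) ^ 2
  = K * (dot (Du psi a b) (Du psi a b) * dot (Dv psi a b) (Dv psi a b)
         - dot (Du psi a b) (Dv psi a b) ^ 2).
Proof.
  intros H. destruct (proj2 (proj2 Hchart) a b H) as [_ [_ [HD [_ [_ [_ [_ [_ [_ [E _]]]]]]]]]].
  unfold II11, II22, II12, I11, I12, I22 in *. rewrite !ip_wdot in E. rewrite !ip_wdot in HD.
  rewrite <- E. field. lra.
Qed.

Lemma psi_u_tangent_M2 a b : U (a, b) -> dot3 (pt psi a b) (Du psi a b) = 0.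
Proof.
  intros H.
  pose proof (wdot_const_on_u _ _ U _ _ _ a b chart_open smooth_psi smooth_psi psi_on_M2 H).
  rewrite (wdot_sym _ _ (Du psi a b)) in H0. lra.
Qed.

Lemma psi_v_tangent_M2 a b : U (a, b) -> dot3 (pt psi a b) (Dv psi a b) = 0.
Proof.
  intros H.
  pose proof (wdot_const_on_v _ _ U _ _ _ a b chart_open smooth_psi smooth_psi psi_on_M2 H).
  rewrite (wdot_sym _ _ (Dv psi a b)) in H0. lra.
Qed.

Lemma Qf_fst a b : fst (Qf eps K psi N a b)
  = (dot (Du psi a b) (Du psi a b) - dot (Dv psi a b) (Dv psi a b)) / 4
    + gfun eps K (nuf N a b) * ((pu (hgt psi) a b ^ 2 - pv (hgt psi) a b ^ 2) / 4).
Proof. unfold Qf, Ecoef, hz, I11, I22, Cplus, Cmult, RtoC; simpl. rewrite !ip_wdot. field. Qed.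

Lemma Qf_snd a b : snd (Qf eps K psi N a b)
  = - dot (Du psi a b) (Dv psi a b) / 2
    + gfun eps K (nuf N a b) * (- (pu (hgt psi) a b * pv (hgt psi) a b) / 2).
Proof. unfold Qf, Ecoef, hz, I12, Cplus, Cmult, RtoC; simpl. rewrite !ip_wdot. field. Qed.

Section Point.

Variables u v : R.
Hypothesis Huv : U (u, v).

Definition g11 := dot (Du psi u v) (Du psi u v).
Definition g12 := dot (Du psi u v) (Dv psi u v).
Definition g22 := dot (Dv psi u v) (Dv psi u v).
Definition detg := g11 * g22 - g12 ^ 2.
Definition ell := dot (Duu psi u v) (pt N u v).
Definition hu := pu (hgt psi) u v.
Definition hv := pv (hgt psi) u v.
Definition nu0 := nuf N u v.

(* The normal of M^2(eps) in R^3 or R^3_1 at psi(u,v), and the unit vector d_t. *)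
Definition pos3 : nat -> R := fun i => if Nat.eqb i 3 then 0 else psi i u v.
Definition e_t : nat -> R := fun i => if Nat.eqb i 3 then 1 else 0.

Lemma detg_pos : 0 < detg.
Proof.
  destruct (proj2 (proj2 Hchart) u v Huv) as [_ [_ [HD _]]].
  unfold I11, I12, I22 in HD. rewrite !ip_wdot in HD. exact HD.
Qed.

Lemma ell_pos : 0 < ell.
Proof.
  destruct (proj2 (proj2 Hchart) u v Huv) as [_ [_ [_ [_ [_ [_ [_ [HL _]]]]]]]].
  unfold II11 in HL. rewrite ip_wdot in HL. exact HL.
Qed.

Lemma ell_sq : ell ^ 2 = K * detg.
Proof.
  destruct (II_conformal u v Huv) as [E1 E2].
  unfold detg, g11, g12, g22. rewrite <- (extrinsic_curvature u v Huv), E1, E2. unfold ell. ring.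
Qed.

Lemma weingarten_uu : dot (Du N u v) (Du psi u v) + dot (pt N u v) (Duu psi u v) = 0.
Proof. exact (wdot_const_on_u _ _ U _ _ _ u v chart_open smooth_N smooth_psi_u N_perp_u Huv). Qed.

Lemma weingarten_vu : dot (Dv N u v) (Du psi u v) + dot (pt N u v) (Duv psi u v) = 0.
Proof. exact (wdot_const_on_v _ _ U _ _ _ u v chart_open smooth_N smooth_psi_u N_perp_u Huv). Qed.

Lemma weingarten_uv : dot (Du N u v) (Dv psi u v) + dot (pt N u v) (Duv psi u v) = 0.
Proof.
  rewrite <- (wdot_const_on_u _ _ U _ _ _ u v chart_open smooth_N smooth_psi_v N_perp_v Huv).
  f_equal. apply wdot_ext; intros i Hi; [reflexivity|]. symmetry. apply (smooth_schwarz U); auto.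
Qed.

Lemma weingarten_vv : dot (Dv N u v) (Dv psi u v) + dot (pt N u v) (Dvv psi u v) = 0.
Proof. exact (wdot_const_on_v _ _ U _ _ _ u v chart_open smooth_N smooth_psi_v N_perp_v Huv). Qed.

Lemma Nu_tangent_M2 : dot3 (Du N u v) (pt psi u v) + dot3 (pt N u v) (Du psi u v) = 0.
Proof. exact (wdot_const_on_u _ _ U _ _ _ u v chart_open smooth_N smooth_psi N_tangent_M2 Huv). Qed.

Lemma Nv_tangent_M2 : dot3 (Dv N u v) (pt psi u v) + dot3 (pt N u v) (Dv psi u v) = 0.
Proof. exact (wdot_const_on_v _ _ U _ _ _ u v chart_open smooth_N smooth_psi N_tangent_M2 Huv). Qed.

Lemma gauss_M2_uu : dot3 (Du psi u v) (Du psi u v) + dot3 (pt psi u v) (Duu psi u v) = 0.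
Proof.
  exact (wdot_const_on_u _ _ U _ _ _ u v chart_open
           smooth_psi smooth_psi_u psi_u_tangent_M2 Huv).
Qed.

Lemma gauss_M2_uv : dot3 (Dv psi u v) (Du psi u v) + dot3 (pt psi u v) (Duv psi u v) = 0.
Proof.
  exact (wdot_const_on_v _ _ U _ _ _ u v chart_open
           smooth_psi smooth_psi_u psi_u_tangent_M2 Huv).
Qed.

Lemma gauss_M2_vv : dot3 (Dv psi u v) (Dv psi u v) + dot3 (pt psi u v) (Dvv psi u v) = 0.
Proof.
  exact (wdot_const_on_v _ _ U _ _ _ u v chart_open
           smooth_psi smooth_psi_v psi_v_tangent_M2 Huv).
Qed.

Lemma dot_pos3 x : dot x pos3 = dot3 x (pt psi u v).
Proof. unfold wdot, pos3, pt; simpl. ring. Qed.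

Lemma Nu_psiu : dot (Du N u v) (Du psi u v) = - ell.
Proof. pose proof weingarten_uu. unfold ell. rewrite (wdot_sym _ _ (pt N u v)) in H. lra. Qed.

Lemma Nu_psiv : dot (Du N u v) (Dv psi u v) = 0.
Proof.
  pose proof weingarten_uv as H.
  rewrite (wdot_sym _ _ (pt N u v)), (proj2 (II_conformal u v Huv)) in H. lra.
Qed.

Lemma Nv_psiu : dot (Dv N u v) (Du psi u v) = 0.
Proof.
  pose proof weingarten_vu as H.
  rewrite (wdot_sym _ _ (pt N u v)), (proj2 (II_conformal u v Huv)) in H. lra.
Qed.

Lemma Nv_psiv : dot (Dv N u v) (Dv psi u v) = - ell.
Proof.
  pose proof weingarten_vv as H.
  rewrite (wdot_sym _ _ (pt N u v)), (proj1 (II_conformal u v Huv)) in H. unfold ell. lra.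
Qed.

Lemma Nu_N : dot (Du N u v) (pt N u v) = 0.
Proof.
  pose proof (wdot_const_on_u _ _ U _ _ _ u v chart_open smooth_N smooth_N N_unit Huv).
  rewrite (wdot_sym _ _ (pt N u v)) in H. lra.
Qed.

Lemma Nv_N : dot (Dv N u v) (pt N u v) = 0.
Proof.
  pose proof (wdot_const_on_v _ _ U _ _ _ u v chart_open smooth_N smooth_N N_unit Huv).
  rewrite (wdot_sym _ _ (pt N u v)) in H. lra.
Qed.

Lemma Nu_pos3 : dot (Du N u v) pos3 = nu0 * hu.
Proof.
  pose proof Nu_tangent_M2 as H. pose proof (N_perp_u u v Huv) as P.
  rewrite dot_pos3. rewrite (wdot_w0 _ (pt N u v)) in H. unfold nu0, nuf, hu, hgt, pt, Du in *. lra.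
Qed.

Lemma Nv_pos3 : dot (Dv N u v) pos3 = nu0 * hv.
Proof.
  pose proof Nv_tangent_M2 as H. pose proof (N_perp_v u v Huv) as P.
  rewrite dot_pos3. rewrite (wdot_w0 _ (pt N u v)) in H. unfold nu0, nuf, hv, hgt, pt, Dv in *. lra.
Qed.

Lemma psiuu_N : dot (Duu psi u v) (pt N u v) = ell.
Proof. reflexivity. Qed.

Lemma psiuv_N : dot (Duv psi u v) (pt N u v) = 0.
Proof. exact (proj2 (II_conformal u v Huv)). Qed.

Lemma psivv_N : dot (Dvv psi u v) (pt N u v) = ell.
Proof. exact (proj1 (II_conformal u v Huv)). Qed.

Lemma psiuu_pos3 : dot (Duu psi u v) pos3 = - (g11 - hu ^ 2).
Proof.
  pose proof gauss_M2_uu as H. rewrite dot_pos3, wdot_sym. rewrite wdot_w0 in H.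
  unfold g11, hu, hgt, Du in *. simpl in H. lra.
Qed.

Lemma psiuv_pos3 : dot (Duv psi u v) pos3 = - (g12 - hu * hv).
Proof.
  pose proof gauss_M2_uv as H. rewrite dot_pos3, wdot_sym.
  rewrite wdot_w0, (wdot_sym _ _ (Dv psi u v)) in H.
  unfold g12, hu, hv, hgt, Du, Dv in *. simpl in H. lra.
Qed.

Lemma psivv_pos3 : dot (Dvv psi u v) pos3 = - (g22 - hv ^ 2).
Proof.
  pose proof gauss_M2_vv as H. rewrite dot_pos3, wdot_sym. rewrite wdot_w0 in H.
  unfold g22, hv, hgt, Dv in *. simpl in H. lra.
Qed.

Lemma e_t_psiu : dot e_t (Du psi u v) = hu.
Proof. unfold wdot, e_t, hu, hgt, Du; simpl. ring. Qed.

Lemma e_t_psiv : dot e_t (Dv psi u v) = hv.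
Proof. unfold wdot, e_t, hv, hgt, Dv; simpl. ring. Qed.

Lemma e_t_N : dot e_t (pt N u v) = nu0.
Proof. unfold wdot, e_t, nu0, nuf, pt; simpl. ring. Qed.

Lemma e_t_pos3 : dot e_t pos3 = 0.
Proof. unfold wdot, e_t, pos3; simpl. ring. Qed.

Lemma e_t_e_t : dot e_t e_t = 1.
Proof. unfold wdot, e_t; simpl. ring. Qed.

Lemma dot_e_t x : dot x e_t = x 3%nat.
Proof. unfold wdot, e_t; simpl. ring. Qed.

Lemma dot_frame_expansion X Y :
  dot X Y = (g22 * dot X (Du psi u v) * dot Y (Du psi u v)
             - g12 * (dot X (Du psi u v) * dot Y (Dv psi u v)
                      + dot X (Dv psi u v) * dot Y (Du psi u v))
             + g11 * dot X (Dv psi u v) * dot Y (Dv psi u v)) / detg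
          + dot X (pt N u v) * dot Y (pt N u v) + eps * (dot X pos3 * dot Y pos3).
Proof.
  unfold detg, g11, g12, g22. rewrite <- !ip_wdot.
  apply (ip_frame_expansion eps (Du psi u v) (Dv psi u v) (pt N u v) pos3 Heps); rewrite ?ip_wdot.
  - exact (N_unit u v Huv).
  - exact (N_perp_u u v Huv).
  - exact (N_perp_v u v Huv).
  - rewrite dot_pos3. exact (N_tangent_M2 u v Huv).
  - rewrite wdot_sym, dot_pos3, wdot_sym. exact (psi_u_tangent_M2 u v Huv).
  - rewrite wdot_sym, dot_pos3, wdot_sym. exact (psi_v_tangent_M2 u v Huv).
  - transitivity (dot3 (pt psi u v) (pt psi u v)); [|exact (psi_on_M2 u v Huv)].
    unfold wdot, pos3, pt; simpl; ring.
  - exact detg_pos.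
Qed.

Definition G111 := dot (Duu psi u v) (Du psi u v).
Definition G112 := dot (Duu psi u v) (Dv psi u v).
Definition G121 := dot (Duv psi u v) (Du psi u v).
Definition G122 := dot (Duv psi u v) (Dv psi u v).
Definition G221 := dot (Dvv psi u v) (Du psi u v).
Definition G222 := dot (Dvv psi u v) (Dv psi u v).

Local Ltac expand_in_frame :=
  rewrite dot_frame_expansion;
  rewrite ?Nu_psiu, ?Nu_psiv, ?Nv_psiu, ?Nv_psiv, ?Nu_N, ?Nv_N, ?Nu_pos3, ?Nv_pos3,
    ?psiuu_N, ?psiuv_N, ?psivv_N, ?psiuu_pos3, ?psiuv_pos3, ?psivv_pos3,
    ?e_t_psiu, ?e_t_psiv, ?e_t_N, ?e_t_pos3, ?e_t_e_t;
  fold G111 G112 G121 G122 G221 G222;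
  pose proof detg_pos; field; lra.

Lemma h_uu : pu (pu (hgt psi)) u v
  = (g22 * G111 * hu - g12 * (G111 * hv + G112 * hu) + g11 * G112 * hv) / detg + ell * nu0.
Proof.
  change (pu (pu (hgt psi)) u v) with (Duu psi u v 3%nat). rewrite <- dot_e_t.
  expand_in_frame.
Qed.

Lemma h_uv : pv (pu (hgt psi)) u v
  = (g22 * G121 * hu - g12 * (G121 * hv + G122 * hu) + g11 * G122 * hv) / detg.
Proof.
  change (pv (pu (hgt psi)) u v) with (Duv psi u v 3%nat). rewrite <- dot_e_t.
  expand_in_frame.
Qed.

Lemma h_vv : pv (pv (hgt psi)) u v
  = (g22 * G221 * hu - g12 * (G221 * hv + G222 * hu) + g11 * G222 * hv) / detg + ell * nu0.
Proof.
  change (pv (pv (hgt psi)) u v) with (Dvv psi u v 3%nat). rewrite <- dot_e_t.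
  expand_in_frame.
Qed.

Lemma nu_u : pu (nuf N) u v = - ell * (g22 * hu - g12 * hv) / detg.
Proof. change (pu (nuf N) u v) with (Du N u v 3%nat). rewrite <- dot_e_t.
  expand_in_frame.
Qed.

Lemma nu_v : pv (nuf N) u v = - ell * (g11 * hv - g12 * hu) / detg.
Proof. change (pv (nuf N) u v) with (Dv N u v 3%nat). rewrite <- dot_e_t.
  expand_in_frame.
Qed.

Lemma psiuu_Nv : dot (Duu psi u v) (Dv N u v)
  = ell * (g12 * G111 - g11 * G112) / detg - eps * (g11 - hu ^ 2) * (nu0 * hv).
Proof. expand_in_frame. Qed.

Lemma psiuv_Nu : dot (Duv psi u v) (Du N u v)
  = ell * (g12 * G122 - g22 * G121) / detg - eps * (g12 - hu * hv) * (nu0 * hu).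
Proof. expand_in_frame. Qed.

Lemma psiuv_Nv : dot (Duv psi u v) (Dv N u v)
  = ell * (g12 * G121 - g11 * G122) / detg - eps * (g12 - hu * hv) * (nu0 * hv).
Proof. expand_in_frame. Qed.

Lemma psivv_Nu : dot (Dvv psi u v) (Du N u v)
  = ell * (g12 * G222 - g22 * G221) / detg - eps * (g22 - hv ^ 2) * (nu0 * hu).
Proof. expand_in_frame. Qed.

(* |grad h|^2 = (g22 hu^2 - 2 g12 hu hv + g11 hv^2) / det g equals 1 - nu^2 = 1 - <N, d_t>^2 *)
Lemma grad_h_sq : (1 - nu0 ^ 2) * detg = g22 * hu ^ 2 - 2 * g12 * hu * hv + g11 * hv ^ 2.
Proof.
  pose proof (dot_frame_expansion e_t e_t) as H.
  rewrite e_t_e_t, e_t_psiu, e_t_psiv, e_t_N, e_t_pos3 in H.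
  pose proof detg_pos.
  replace (g22 * hu ^ 2 - 2 * g12 * hu * hv + g11 * hv ^ 2)
    with ((g22 * hu * hu - g12 * (hu * hv + hv * hu) + g11 * hv * hv) / detg * detg)
    by (field; lra).
  replace ((g22 * hu * hu - g12 * (hu * hv + hv * hu) + g11 * hv * hv) / detg)
    with (1 - nu0 * nu0) by lra.
  ring.
Qed.

Lemma g11_derive_u : is_derive (fun s => dot (Du psi s v) (Du psi s v)) u (2 * G111).
Proof.
  apply (is_derive_eq _ _ (dot (Duu psi u v) (Du psi u v) + dot (Du psi u v) (Duu psi u v))).
  - exact (is_derive_wdot_u eps 1 U _ _ u v smooth_psi_u smooth_psi_u Huv).
  - unfold G111. rewrite (wdot_sym _ _ (Du psi u v)). ring.
Qed.

Lemma g12_derive_u : is_derive (fun s => dot (Du psi s v) (Dv psi s v)) u (G112 + G121).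
Proof.
  apply (is_derive_eq _ _ (dot (Duu psi u v) (Dv psi u v)
                           + dot (Du psi u v) (Du (fun i => pv (psi i)) u v))).
  - exact (is_derive_wdot_u eps 1 U _ _ u v smooth_psi_u smooth_psi_v Huv).
  - unfold G112, G121. rewrite (wdot_sym _ _ (Duv psi u v)). f_equal.
    apply wdot_ext; [reflexivity|]. intros i Hi. apply (smooth_schwarz U); auto.
Qed.

Lemma g22_derive_u : is_derive (fun s => dot (Dv psi s v) (Dv psi s v)) u (2 * G122).
Proof.
  apply (is_derive_eq _ _ (dot (Du (fun i => pv (psi i)) u v) (Dv psi u v)
                           + dot (Dv psi u v) (Du (fun i => pv (psi i)) u v))).
  - exact (is_derive_wdot_u eps 1 U _ _ u v smooth_psi_v smooth_psi_v Huv).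
  - unfold G122. rewrite (wdot_sym _ _ (Dv psi u v)).
    rewrite (wdot_ext _ _ (Du (fun i => pv (psi i)) u v) (Duv psi u v) (Dv psi u v) (Dv psi u v));
      [ring | | reflexivity].
    intros i Hi. apply (smooth_schwarz U); auto.
Qed.

Lemma g11_derive_v : is_derive (fun t => dot (Du psi u t) (Du psi u t)) v (2 * G121).
Proof.
  apply (is_derive_eq _ _ (dot (Duv psi u v) (Du psi u v) + dot (Du psi u v) (Duv psi u v))).
  - exact (is_derive_wdot_v eps 1 U _ _ u v smooth_psi_u smooth_psi_u Huv).
  - unfold G121. rewrite (wdot_sym _ _ (Du psi u v)). ring.
Qed.

Lemma g12_derive_v : is_derive (fun t => dot (Du psi u t) (Dv psi u t)) v (G122 + G221).
Proof.
  apply (is_derive_eq _ _ (dot (Duv psi u v) (Dv psi u v) + dot (Du psi u v) (Dvv psi u v))).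
  - exact (is_derive_wdot_v eps 1 U _ _ u v smooth_psi_u smooth_psi_v Huv).
  - unfold G122, G221. rewrite (wdot_sym _ _ (Du psi u v)). ring.
Qed.

Lemma g22_derive_v : is_derive (fun t => dot (Dv psi u t) (Dv psi u t)) v (2 * G222).
Proof.
  apply (is_derive_eq _ _ (dot (Dvv psi u v) (Dv psi u v) + dot (Dv psi u v) (Dvv psi u v))).
  - exact (is_derive_wdot_v eps 1 U _ _ u v smooth_psi_v smooth_psi_v Huv).
  - unfold G222. rewrite (wdot_sym _ _ (Dv psi u v)). ring.
Qed.

Lemma codazzi_u :
  2 * ell * (dot (Dvv psi u v) (Du N u v) - dot (Duv psi u v) (Dv N u v))
  = K * (2 * G111 * g22 + 2 * g11 * G122 - 2 * g12 * (G112 + G121)).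
Proof.
  pose (Tuuu := fun i => pu (pu (pu (psi i))) u v).
  pose (Tuvv := fun i => pv (pv (pu (psi i))) u v).
  assert (Suu : forall i, (i < 4)%nat -> smooth_on U (pu (pu (psi i)))) by auto.
  assert (Suv : forall i, (i < 4)%nat -> smooth_on U (pv (pu (psi i)))) by auto.
  assert (Svv : forall i, (i < 4)%nat -> smooth_on U (pv (pv (psi i)))) by auto.
  assert (d11 : is_derive (fun s => dot (Duu psi s v) (pt N s v)) u
                  (dot Tuuu (pt N u v) + dot (Duu psi u v) (Du N u v)))
    by exact (is_derive_wdot_u eps 1 U _ N u v Suu smooth_N Huv).
  assert (d22 : is_derive (fun s => dot (Dvv psi s v) (pt N s v)) u
                  (dot Tuvv (pt N u v) + dot (Dvv psi u v) (Du N u v))).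
  { eapply is_derive_eq; [exact (is_derive_wdot_u eps 1 U _ N u v Svv smooth_N Huv)|].
    f_equal. apply wdot_ext; [|reflexivity]. intros i Hi. apply (smooth_schwarz_vv U); auto. }
  assert (d12 : is_derive (fun t => dot (Duv psi u t) (pt N u t)) v
                  (dot Tuvv (pt N u v) + dot (Duv psi u v) (Dv N u v)))
    by exact (is_derive_wdot_v eps 1 U _ N u v Suv smooth_N Huv).
  (* differentiate II_11 = II_22, II_12 = 0 and det II = K det I *)
  assert (E1 := is_derive_const_on_u U _ 0 u v _ chart_open
    (fun a b H => Rminus_diag_eq _ _ (eq_sym (proj1 (II_conformal a b H)))) Huv
    (is_derive_minus _ _ _ _ _ d11 d22)).
  assert (E2 := is_derive_const_on_v U _ 0 u v _ chart_open
    (fun a b H => proj2 (II_conformal a b H)) Huv d12).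
  assert (d12u : is_derive (fun s => dot (Duv psi s v) (pt N s v)) u
                  (dot (Du (fun i => pv (pu (psi i))) u v) (pt N u v)
                   + dot (Duv psi u v) (Du N u v)))
    by exact (is_derive_wdot_u eps 1 U _ N u v Suv smooth_N Huv).
  assert (E3 := is_derive_const_on_u U _ 0 u v _ chart_open
    (fun a b H => Rminus_diag_eq _ _ (extrinsic_curvature a b H)) Huv
    (is_derive_minus _ _ _ _ _ (is_derive_det2 _ _ _ _ _ _ _ d11 d12u d22)
       (is_derive_scal _ _ K _
          (is_derive_det2 _ _ _ _ _ _ _ g11_derive_u g12_derive_u g22_derive_u)))).
  simpl in E1, E3. unfold minus, plus, opp, scal in E1, E3. simpl in E1, E3.
  unfold mult in E3; simpl in E3.
  rewrite psivv_N, psiuv_N in E3. fold ell g11 g12 g22 in E3.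
  assert (Hd : dot Tuuu (pt N u v) + dot (Duu psi u v) (Du N u v)
               = dot (Dvv psi u v) (Du N u v) - dot (Duv psi u v) (Dv N u v)) by lra.
  assert (Hd' : dot Tuvv (pt N u v) + dot (Dvv psi u v) (Du N u v)
               = dot (Dvv psi u v) (Du N u v) - dot (Duv psi u v) (Dv N u v)) by lra.
  rewrite Hd, Hd' in E3. lra.
Qed.

Lemma codazzi_v :
  2 * ell * (dot (Duu psi u v) (Dv N u v) - dot (Duv psi u v) (Du N u v))
  = K * (2 * G121 * g22 + 2 * g11 * G222 - 2 * g12 * (G122 + G221)).
Proof.
  pose (Tuuv := fun i => pv (pu (pu (psi i))) u v).
  pose (Tvvv := fun i => pv (pv (pv (psi i))) u v).
  assert (Suu : forall i, (i < 4)%nat -> smooth_on U (pu (pu (psi i)))) by auto.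
  assert (Suv : forall i, (i < 4)%nat -> smooth_on U (pv (pu (psi i)))) by auto.
  assert (Svv : forall i, (i < 4)%nat -> smooth_on U (pv (pv (psi i)))) by auto.
  assert (d11 : is_derive (fun t => dot (Duu psi u t) (pt N u t)) v
                  (dot Tuuv (pt N u v) + dot (Duu psi u v) (Dv N u v)))
    by exact (is_derive_wdot_v eps 1 U _ N u v Suu smooth_N Huv).
  assert (d22 : is_derive (fun t => dot (Dvv psi u t) (pt N u t)) v
                  (dot Tvvv (pt N u v) + dot (Dvv psi u v) (Dv N u v)))
    by exact (is_derive_wdot_v eps 1 U _ N u v Svv smooth_N Huv).
  assert (d12 : is_derive (fun s => dot (Duv psi s v) (pt N s v)) u
                  (dot Tuuv (pt N u v) + dot (Duv psi u v) (Du N u v))).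
  { eapply is_derive_eq; [exact (is_derive_wdot_u eps 1 U _ N u v Suv smooth_N Huv)|].
    f_equal. apply wdot_ext; [|reflexivity]. intros i Hi. apply (smooth_schwarz U); auto. }
  assert (d12v : is_derive (fun t => dot (Duv psi u t) (pt N u t)) v
                  (dot (Dv (fun i => pv (pu (psi i))) u v) (pt N u v)
                   + dot (Duv psi u v) (Dv N u v)))
    by exact (is_derive_wdot_v eps 1 U _ N u v Suv smooth_N Huv).
  assert (E1 := is_derive_const_on_v U _ 0 u v _ chart_open
    (fun a b H => Rminus_diag_eq _ _ (eq_sym (proj1 (II_conformal a b H)))) Huv
    (is_derive_minus _ _ _ _ _ d11 d22)).
  assert (E2 := is_derive_const_on_u U _ 0 u v _ chart_open
    (fun a b H => proj2 (II_conformal a b H)) Huv d12).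
  assert (E3 := is_derive_const_on_v U _ 0 u v _ chart_open
    (fun a b H => Rminus_diag_eq _ _ (extrinsic_curvature a b H)) Huv
    (is_derive_minus _ _ _ _ _ (is_derive_det2 _ _ _ _ _ _ _ d11 d12v d22)
       (is_derive_scal _ _ K _
          (is_derive_det2 _ _ _ _ _ _ _ g11_derive_v g12_derive_v g22_derive_v)))).
  simpl in E1, E3. unfold minus, plus, opp, scal in E1, E3. simpl in E1, E3.
  unfold mult in E3; simpl in E3.
  rewrite psivv_N, psiuv_N in E3. fold ell g11 g12 g22 in E3.
  assert (Hd : dot Tuuv (pt N u v) + dot (Duu psi u v) (Dv N u v)
               = dot (Duu psi u v) (Dv N u v) - dot (Duv psi u v) (Du N u v)) by lra.
  assert (Hd' : dot Tvvv (pt N u v) + dot (Dvv psi u v) (Dv N u v)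
               = dot (Duu psi u v) (Dv N u v) - dot (Duv psi u v) (Du N u v)) by lra.
  rewrite Hd, Hd' in E3. lra.
Qed.

Lemma codazzi_christoffel :
  G221 = - eps * nu0 * hu * detg / ell - G111 /\ G222 = - eps * nu0 * hv * detg / ell - G112.
Proof.
  pose proof detg_pos. pose proof ell_pos.
  apply (codazzi_solve eps K ell g11 g12 g22 hu hv nu0 G111 G112 G121 G122 G221 G222);
    fold detg; try lra.
  - exact ell_sq.
  - rewrite <- psivv_Nu, <- psiuv_Nv. exact codazzi_u.
  - rewrite <- psiuu_Nv, <- psiuv_Nu. exact codazzi_v.
Qed.

Lemma poles_critical : 1 - nu0 ^ 2 <> 0 \/ (hu = 0 /\ hv = 0).
Proof.
  destruct (Req_dec (1 - nu0 ^ 2) 0) as [Z|Z]; [right | now left].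
  apply (definite_quadratic_eq0 g11 g12 g22); [exact detg_pos|].
  rewrite <- grad_h_sq, Z. ring.
Qed.

Lemma hu_derive_u : is_derive (fun s => pu (hgt psi) s v) u (pu (pu (hgt psi)) u v).
Proof. apply (smooth_is_derive_u U); auto. Qed.

Lemma hv_derive_u : is_derive (fun s => pv (hgt psi) s v) u (pv (pu (hgt psi)) u v).
Proof. rewrite <- (smooth_schwarz U); auto. apply (smooth_is_derive_u U); auto. Qed.

Lemma hu_derive_v : is_derive (fun t => pu (hgt psi) u t) v (pv (pu (hgt psi)) u v).
Proof. apply (smooth_is_derive_v U); auto. Qed.

Lemma hv_derive_v : is_derive (fun t => pv (hgt psi) u t) v (pv (pv (hgt psi)) u v).
Proof. apply (smooth_is_derive_v U); auto. Qed.

Local Ltac pole_side_condition :=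
  destruct poles_critical as [Hs | [H1 H2]]; [now left | right];
  unfold hu, hv in H1, H2; rewrite H1, H2; split; field.

Lemma Qr_derive_u : Derive (fun s => fst (Qf eps K psi N s v)) u
  = (2 * G111 - 2 * G122) / 4
    + (Derive (gfun eps K) nu0 * pu (nuf N) u v * ((hu ^ 2 - hv ^ 2) / 4)
       + gfun eps K nu0 * ((2 * hu * pu (pu (hgt psi)) u v - 2 * hv * pv (pu (hgt psi)) u v) / 4)).
Proof.
  apply is_derive_unique. eapply is_derive_ext; [intros s; symmetry; apply Qf_fst|].
  eapply is_derive_eq.
  - apply (is_derive_plus_gfun_mult eps K _ (fun s => nuf N s v) _ u); auto.
    + apply is_derive_sub_div; [exact g11_derive_u | exact g22_derive_u].
    + apply (smooth_is_derive_u U); auto.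
    + apply is_derive_sq_diff4; [exact hu_derive_u | exact hv_derive_u].
    + pole_side_condition.
  - reflexivity.
Qed.

Lemma Qr_derive_v : Derive (fun t => fst (Qf eps K psi N u t)) v
  = (2 * G121 - 2 * G222) / 4
    + (Derive (gfun eps K) nu0 * pv (nuf N) u v * ((hu ^ 2 - hv ^ 2) / 4)
       + gfun eps K nu0 * ((2 * hu * pv (pu (hgt psi)) u v - 2 * hv * pv (pv (hgt psi)) u v) / 4)).
Proof.
  apply is_derive_unique. eapply is_derive_ext; [intros t; symmetry; apply Qf_fst|].
  eapply is_derive_eq.
  - apply (is_derive_plus_gfun_mult eps K _ (fun t => nuf N u t) _ v); auto.
    + apply is_derive_sub_div; [exact g11_derive_v | exact g22_derive_v].
    + apply (smooth_is_derive_v U); auto.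
    + apply is_derive_sq_diff4; [exact hu_derive_v | exact hv_derive_v].
    + pole_side_condition.
  - reflexivity.
Qed.

Lemma Qi_derive_u : Derive (fun s => snd (Qf eps K psi N s v)) u
  = - (G112 + G121) / 2
    + (Derive (gfun eps K) nu0 * pu (nuf N) u v * (- (hu * hv) / 2)
       + gfun eps K nu0 * (- (pu (pu (hgt psi)) u v * hv + hu * pv (pu (hgt psi)) u v) / 2)).
Proof.
  apply is_derive_unique. eapply is_derive_ext; [intros s; symmetry; apply Qf_snd|].
  eapply is_derive_eq.
  - apply (is_derive_plus_gfun_mult eps K _ (fun s => nuf N s v) _ u); auto.
    + apply is_derive_opp_div. exact g12_derive_u.
    + apply (smooth_is_derive_u U); auto.
    + apply is_derive_neg_half_mult; [exact hu_derive_u | exact hv_derive_u].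
    + pole_side_condition.
  - reflexivity.
Qed.

Lemma Qi_derive_v : Derive (fun t => snd (Qf eps K psi N u t)) v
  = - (G122 + G221) / 2
    + (Derive (gfun eps K) nu0 * pv (nuf N) u v * (- (hu * hv) / 2)
       + gfun eps K nu0 * (- (pv (pu (hgt psi)) u v * hv + hu * pv (pv (hgt psi)) u v) / 2)).
Proof.
  apply is_derive_unique. eapply is_derive_ext; [intros t; symmetry; apply Qf_snd|].
  eapply is_derive_eq.
  - apply (is_derive_plus_gfun_mult eps K _ (fun t => nuf N u t) _ v); auto.
    + apply is_derive_opp_div. exact g12_derive_v.
    + apply (smooth_is_derive_v U); auto.
    + apply is_derive_neg_half_mult; [exact hu_derive_v | exact hv_derive_v].
    + pole_side_condition.
  - reflexivity.
Qed.

Lemma Qzbar_eq : Qzbar eps K psi N u v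
  = Cmult (0, - 2 * K * Derive (gfun eps K) nu0
              * im_conj_sq_mul (hz psi u v) (Qf eps K psi N u v) / ell) (hz psi u v).
Proof.
  destruct codazzi_christoffel as [Hc1 Hc2]. pose proof ell_pos.
  unfold Qzbar.
  apply (Qzbar_reduction eps K ell g11 g12 g22 hu hv nu0 (gfun eps K nu0) (Derive (gfun eps K) nu0)
           G111 G112 G121 G122 G221 G222 (pu (pu (hgt psi)) u v) (pv (pu (hgt psi)) u v)
           (pv (pv (hgt psi)) u v) (pu (nuf N) u v) (pv (nuf N) u v)); fold detg.
  - exact detg_pos.
  - lra.
  - exact ell_sq.
  - exact (gfun_ode eps K nu0 Heps HK).
  - exact grad_h_sq.
  - exact Hc1.
  - exact Hc2.
  - exact h_uu.
  - exact h_uv.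
  - exact h_vv.
  - exact nu_u.
  - exact nu_v.
  - exact Qr_derive_u.
  - exact Qr_derive_v.
  - exact Qi_derive_u.
  - exact Qi_derive_v.
  - reflexivity.
  - rewrite (surjective_pairing (Qf eps K psi N u v)), Qf_fst, Qf_snd. reflexivity.
Qed.

Lemma Cmod_Qzbar_sq : Cmod (Qzbar eps K psi N u v) ^ 2
  = (- 2 * K * Derive (gfun eps K) nu0 * im_conj_sq_mul (hz psi u v) (Qf eps K psi N u v) / ell) ^ 2
    * Cmod (hz psi u v) ^ 2.
Proof. rewrite Qzbar_eq, Cmod_mult, Rpow_mult_distr, (Cmod_sq (0, _)). simpl. ring. Qed.

Lemma Qf_im_bound :
  16 * chifun eps K nu0 * im_conj_sq_mul (hz psi u v) (Qf eps K psi N u v) ^ 2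
  <= detg * (1 - nu0 ^ 2) ^ 2 * Cmod (Qf eps K psi N u v) ^ 2.
Proof.
  rewrite chifun_gfun.
  apply im_conj_sq_mul_bound.
  - exact detg_pos.
  - rewrite <- chifun_gfun. now apply chifun_pos.
  - fold detg. rewrite grad_h_sq. unfold hz, hu, hv. simpl. field.
  - rewrite (surjective_pairing (Qf eps K psi N u v)), Qf_fst, Qf_snd.
    unfold hz, g11, g12, g22, nu0, hu, hv. simpl. f_equal; field.
Qed.

End Point.
End Chart.

Theorem lemma7p1 (eps K : R) (U : R * R -> Prop) (psi N : nat -> R -> R -> R)
  (Heps : eps = 1 \/ eps = -1) (HK : 0 < K)
  (Hchart : cec_chart eps K U psi N) (u v : R) (Huv : U (u, v)) :
  Cmod (Qzbar eps K psi N u v) ^ 2 <=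
    K * (Derive (gfun eps K) (nuf N u v)) ^ 2 * (1 - nuf N u v ^ 2) ^ 2
      * Cmod (hz psi u v) ^ 2 / (4 * chifun eps K (nuf N u v))
      * Cmod (Qf eps K psi N u v) ^ 2.
Proof.
  rewrite (Cmod_Qzbar_sq eps K U psi N Heps HK Hchart u v Huv).
  apply (scaled_square_bound _ _ (detg eps psi u v)).
  - exact HK.
  - exact (detg_pos eps K U psi N Hchart u v Huv).
  - exact (chifun_pos eps K (nuf N u v) Heps HK).
  - exact (ell_sq eps K U psi N Hchart u v Huv).
  - apply pow2_ge_0.
  - exact (Qf_im_bound eps K U psi N Heps HK Hchart u v Huv).
Qed.
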